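(* For any $u,\alpha\in\mathbb C$ with $\mathrm{Re}(u+\alpha)>0$ and any $\kappa_1,\kappa_2\in\mathbb R$, $$\int_{\mathbb R^2}e^{-\alpha(\kappa_1+\kappa_2-\lambda_1-\lambda_2)-u(\lambda_1-\lambda_2)-e^{-(\kappa_1-\lambda_1)}-e^{-(\lambda_1-\kappa_2)}-e^{-(\kappa_2-\lambda_2)}}\,d\lambda_1d\lambda_2=\int_{\mathbb R^2}e^{-\alpha(\pi_1+\pi_2-\kappa_1-\kappa_2)-u(\pi_1-\pi_2)-e^{-(\pi_1-\kappa_1)}-e^{-(\kappa_1-\pi_2)}-e^{-(\pi_2-\kappa_2)}}\,d\pi_1d\pi_2,$$ and both integrals are finite (absolutely convergent). *)

From HB Require Import structures.
From mathcomp Require Import all_boot all_order all_algebra.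
From mathcomp Require Import all_classical all_reals all_analysis.
From mathcomp.real_closed Require Export complex.
Set Implicit Arguments. Unset Strict Implicit. Unset Printing Implicit Defensive.
Import Order.TTheory GRing.Theory Num.Theory.
Local Open Scope ring_scope.

Definition cexp (R : realType) (z : R[i]) : R[i] :=
  ((expR (complex.Re z))%:C * ((cos (complex.Im z))%:C + 'i * (sin (complex.Im z))%:C))%C.

Definition leb2 (R : realType) :=
  ((@lebesgue_measure R) \x (@lebesgue_measure R))%E.

Definition cintegrable (R : realType) (F : R * R -> R[i]) : Prop :=
  [/\ measurable_fun setT (fun p => complex.Re (F p)),
      measurable_fun setT (fun p => complex.Im (F p)) &
      (\int[@leb2 R]_p (Num.sqrt (complex.Re (F p) ^+ 2 + complex.Im (F p) ^+ 2))%:E < +oo)%E].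

Definition cintegral (R : realType) (F : R * R -> R[i]) : R[i] :=
  ((Rintegral (@leb2 R) setT (fun p => complex.Re (F p)))%:C
   + 'i * (Rintegral (@leb2 R) setT (fun p => complex.Im (F p)))%:C)%C.

From HB Require Import structures.
From mathcomp Require Import all_boot all_order all_algebra.
From mathcomp Require Import all_classical all_reals all_analysis.
From mathcomp.real_closed Require Import complex.
From mathcomp Require Import measurable_realfun ring lra.
Import Order.TTheory GRing.Theory Num.Theory numFieldNormedType.Exports.
Local Open Scope ring_scope.
Local Open Scope classical_set_scope.

(* Substituting lambda1 = kappa1 + kappa2 - pi2, lambda2 = kappa1 + kappa2 - pi1 in
   the first integrand gives the second one.  This substitution is a reflection
   of each coordinate followed by a swap of the coordinates, so it preserves
   Lebesgue measure on R^2 and the two integrals agree.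
   The modulus of the first integrand is exp (A lambda1 + B lambda2) with
   A x = Re (alpha - u) x - e^(x - kappa1) - e^(kappa2 - x) + const, which decays
   doubly exponentially on both sides, and B y = Re (u + alpha) y - e^(y - kappa2),
   which decays exponentially as y -> -oo exactly because Re (u + alpha) > 0.
   Both are dominated by C e^(-r |x|), so by Tonelli the modulus is integrable. *)

Definition preserves_measure {d} {T : measurableType d} {R : realType}
    (mu : set T -> \bar R) (phi : T -> T) :=
  forall A, measurable A -> mu (phi @^-1` A) = mu A.

Section measure_preserving.
Local Open Scope ereal_scope.
Context {d} {T : measurableType d} {R : realType} {mu : {measure set T -> \bar R}}.
Context {phi : T -> T}.
Hypotheses (mphi : measurable_fun setT phi) (phi_mu : preserves_measure mu phi).

Lemma ge0_integral_comp_preserving (h : T -> \bar R) :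
  measurable_fun setT h -> (forall x, 0 <= h x) ->
  \int[mu]_x h (phi x) = \int[mu]_x h x.
Proof.
move=> mh h0.
rewrite [RHS](eq_measure_integral (pushforward mu phi)); last first.
  by move=> A mA _; exact/esym/phi_mu.
by rewrite (ge0_integral_pushforward mphi) // preimage_setT.
Qed.

Lemma integral_comp_preserving (h : T -> \bar R) :
  measurable_fun setT h -> \int[mu]_x h (phi x) = \int[mu]_x h x.
Proof.
move=> mh; rewrite integralE [RHS]integralE.
change (fun x => h (phi x)) with (h \o phi); rewrite funepos_comp funeneg_comp.
by congr (_ - _); apply: ge0_integral_comp_preserving;
  [exact: measurable_funepos | exact: funepos_ge0 |
   exact: measurable_funeneg | exact: funeneg_ge0].
Qed.

End measure_preserving.

Lemma lebesgue_measure_reflect {R : realType} (K : R) :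
  preserves_measure lebesgue_measure (fun x : R => K - x).
Proof.
move=> A mA.
rewrite -[LHS]/(pushforward lebesgue_measure (fun x => K - x : measurableTypeR R) A).
apply/esym/lebesgue_measure_unique => //; first exact: measurable_funB.
move=> ? _ [[a b] _ <-]; rewrite /= /pushforward.
have -> : (fun x => K - x) @^-1` `]a, b] = `[K - b, K - a[ :> set R.
  by apply/seteqP; split => x /=; rewrite !in_itv /= => /andP[]; lra.
rewrite !lebesgue_measure_itv /= !lte_fin ltrD2l ltrN2.
by case: ifP => // _; congr (_%:E); lra.
Qed.

Lemma preserves_measure_prod_swap {d} {T : measurableType d} {R : realType}
    {mu : {sigma_finite_measure set T -> \bar R}} {r : T -> T} :
  measurable_fun setT r -> preserves_measure mu r ->
  preserves_measure (mu \x mu)%E (fun p : T * T => (r p.2, r p.1)).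
Proof.
move=> mr r_mu X mX.
rewrite -[LHS]/(pushforward (mu \x mu)%E (fun p : T * T => (r p.2, r p.1)) X).
apply/esym/product_measure_unique => //.
  exact: measurable_fun_pair (measurableT_comp mr measurable_snd)
                             (measurableT_comp mr measurable_fst).
move=> ? A B mA mB; rewrite /= /pushforward.
have -> : (fun p : T * T => (r p.2, r p.1)) @^-1` (A `*` B) =
          (r @^-1` B) `*` (r @^-1` A).
  by apply/seteqP; split => -[x y] [].
rewrite product_measure1E; last 2 first.
- by rewrite -[X in measurable X]setTI; exact: mr.
- by rewrite -[X in measurable X]setTI; exact: mr.
by rewrite (r_mu A) // muleC; congr (_ * _)%E; exact: r_mu.
Qed.

Lemma ge0_integral_prod_mul {d1 d2} {T1 : measurableType d1} {T2 : measurableType d2}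
    {R : realType} {m1 : {sigma_finite_measure set T1 -> \bar R}}
    {m2 : {sigma_finite_measure set T2 -> \bar R}} (f : T1 -> R) (g : T2 -> R) :
  measurable_fun setT f -> measurable_fun setT g ->
  (forall x, 0 <= f x) -> (forall y, 0 <= g y) ->
  (\int[m1 \x m2]_p (f p.1 * g p.2)%:E =
   \int[m1]_x (f x)%:E * \int[m2]_y (g y)%:E)%E.
Proof.
move=> mf mg f0 g0; rewrite fubini_tonelli1 /fubini_F /=; last 2 first.
- apply/measurable_EFinP/measurable_funM.
    exact: measurableT_comp mf measurable_fst.
  exact: measurableT_comp mg measurable_snd.
- by move=> p; rewrite lee_fin mulr_ge0.
have inner x : (\int[m2]_y (f x * g y)%:E = (f x)%:E * \int[m2]_y (g y)%:E)%E.
  under eq_integral do rewrite EFinM.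
  rewrite ge0_integralZl_EFin // => [y _|]; first by rewrite lee_fin.
  exact/measurable_EFinP.
under eq_integral do rewrite inner.
rewrite ge0_integralZr //; first exact/measurable_EFinP.
- by move=> x _; rewrite lee_fin.
- by apply: integral_ge0 => y _; rewrite lee_fin.
Qed.

Section exponential_decay.
Context {R : realType}.
Local Open Scope ereal_scope.
Local Notation mu := (@lebesgue_measure R).

Let continuous_expR_Nabs (r : R) : continuous (fun x : R => expR (- r * `|x|)).
Proof.
move=> x; apply: continuous_comp; last exact: continuous_expR.
by apply: continuousM; [exact: cst_continuous | exact: norm_continuous].
Qed.

Lemma integral_expR_Nabs_lty (r : R) : (0 < r)%R ->
  \int[mu]_x (expR (- r * `|x|))%:E < +oo.
Proof.
move=> r0; rewrite ge0_symfun_integralT; last 3 first.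
- by move=> x; exact: expR_ge0.
- exact: continuous_expR_Nabs.
- by move=> x; rewrite /= normrN.
have pdfE x : (0 <= x)%R -> expR (- r * `|x|) = (r^-1 * exponential_pdf r x)%R.
  by move=> x0; rewrite exponential_pdfE // ger0_norm // mulrA mulVf ?gt_eqF // mul1r.
have mpdf : measurable_fun setT (fun x => (exponential_pdf r x)%:E).
  by apply/measurable_EFinP; exact: measurable_exponential_pdf.
have pdf0 x : 0 <= (exponential_pdf r x)%:E.
  by rewrite lee_fin exponential_pdf_ge0 // ltW.
apply: (@le_lt_trans _ _ (2%:E * (r^-1)%:E)); last by rewrite -EFinM ltry.
rewrite lee_pmul2l //.
have -> : \int[mu]_(x in [set x | (0 <= x)%R]) (expR (- r * `|x|))%:E =
    \int[mu]_(x in [set x | (0 <= x)%R]) ((r^-1)%:E * (exponential_pdf r x)%:E).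
  by apply: eq_integral => x; rewrite inE /= => x0; rewrite pdfE // EFinM.
have mR0 : measurable [set x : R | (0 <= x)%R] by rewrite -set_itvcy.
have r0' : (0 <= r^-1)%R by rewrite invr_ge0 ltW.
apply: (@le_trans _ _ (\int[mu]_x ((r^-1)%:E * (exponential_pdf r x)%:E))).
  apply: ge0_subset_integral => //; first exact: measurable_funeM.
  by move=> x _; rewrite mule_ge0.
rewrite ge0_integralZl_EFin //.
by rewrite integral_exponential_pdf // mule1.
Qed.

Lemma integral_expR_lty {f : R -> R} {C r : R} : (0 < r)%R ->
  measurable_fun setT f -> (forall x, f x <= C - r * `|x|)%R ->
  \int[mu]_x (expR (f x))%:E < +oo.
Proof.
move=> r0 mf fle.
have mexpf : measurable_fun setT (fun x => expR (f x)).
  exact: measurableT_comp (@measurable_expR R) mf.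
have mbound : measurable_fun setT (fun x : R => expR (- r * `|x|)).
  exact: continuous_measurable_fun (continuous_expR_Nabs r).
apply: (@le_lt_trans _ _ (\int[mu]_x ((expR C)%:E * (expR (- r * `|x|))%:E))).
  apply: ge0_le_integral => //.
  - exact/measurable_EFinP.
  - by apply: measurable_funeM; exact/measurable_EFinP.
  - by move=> x _; rewrite -EFinM lee_fin -expRD ler_expR mulNr; exact: fle.
rewrite ge0_integralZl_EFin //; last exact/measurable_EFinP.
by rewrite lte_mul_pinfty // ?lee_fin ?expR_ge0 // integral_expR_Nabs_lty.
Qed.

End exponential_decay.

Lemma integral_expR_sep_lty {R : realType} (A B : R -> R) :
  measurable_fun setT A -> measurable_fun setT B ->
  (\int[lebesgue_measure]_x (expR (A x))%:E < +oo)%E ->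
  (\int[lebesgue_measure]_y (expR (B y))%:E < +oo)%E ->
  (\int[@leb2 R]_p (expR (A p.1 + B p.2))%:E < +oo)%E.
Proof.
move=> mA mB finA finB; rewrite /leb2; under eq_integral do rewrite expRD.
rewrite (ge0_integral_prod_mul (fun x : measurableTypeR R => expR (A x))
                             (fun y : measurableTypeR R => expR (B y))); last 4 first.
- exact: measurableT_comp (@measurable_expR R) mA.
- exact: measurableT_comp (@measurable_expR R) mB.
- by move=> x; exact: expR_ge0.
- by move=> y; exact: expR_ge0.
have intA0 : (0 <= \int[lebesgue_measure]_x (expR (A x))%:E)%E.
  by apply: integral_ge0 => x _; rewrite lee_fin expR_ge0.
by rewrite lte_mul_pinfty // ge0_fin_numE.
Qed.

Section exponential_bounds.
Context {R : realType}.

Lemma linear_sub_expR_le {m : R} (k x : R) : 0 < m ->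
  m * x - expR (x - k) <= m * (k + ln m - 1).
Proof.
move=> m0.
have shift : expR (x - k) = m * expR (x - k - ln m).
  by rewrite [in RHS]expRD expRN lnK ?posrE // mulrC divfK ?gt_eqF.
have := expR_ge1Dx (x - k - ln m); rewrite -(ler_pM2l m0) -shift.
nra.
Qed.

Lemma one_sided_decay {s : R} (k : R) : 0 < s ->
  exists C, forall y, s * y - expR (y - k) <= C - s * `|y|.
Proof.
move=> s0; set c := 2 * s * (k + ln (2 * s) - 1).
exists `|c| => y; have := ler_norm c; have := expR_ge0 (y - k).
have [y0|y0] := leP 0 y.
  have s2 : 0 < 2 * s by rewrite mulr_gt0.
  have := linear_sub_expR_le k y s2; rewrite (ger0_norm y0) -/c; nra.
have := normr_ge0 c; rewrite (ltr0_norm y0); nra.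
Qed.

Lemma two_sided_decay (d k1 k2 : R) :
  exists C, forall x, d * x - expR (x - k1) - expR (k2 - x) <= C - `|x|.
Proof.
set M := `|d| + 1; have M0 : 0 < M by rewrite ltr_pwDr ?normr_ge0.
set c1 := M * (k1 + ln M - 1); set c2 := M * (- k2 + ln M - 1).
exists (`|c1| + `|c2|) => x.
have := ler_norm c1; have := ler_norm c2; have := normr_ge0 c1; have := normr_ge0 c2.
have := expR_ge0 (x - k1); have := expR_ge0 (k2 - x).
have [x0|x0] := leP 0 x.
  have : d * x <= `|d| * x by rewrite ler_wpM2r // ler_norm.
  have := linear_sub_expR_le k1 x M0; rewrite (ger0_norm x0) -/c1 /M; lra.
have : - d * - x <= `|d| * - x.
  by rewrite ler_wpM2r ?oppr_ge0 ?(ltW x0) // -normrN ler_norm.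
have := linear_sub_expR_le (- k2) (- x) M0.
rewrite opprK (addrC (- x)) (ltr0_norm x0) -/c2 /M; lra.
Qed.

End exponential_bounds.

Section cexp.
Context {R : realType}.
Implicit Types z : R[i].

Lemma Re_cexp z : complex.Re (cexp z) = expR (complex.Re z) * cos (complex.Im z).
Proof. by case: z => x y; rewrite /cexp /=; ring. Qed.

Lemma Im_cexp z : complex.Im (cexp z) = expR (complex.Re z) * sin (complex.Im z).
Proof. by case: z => x y; rewrite /cexp /=; ring. Qed.

Lemma modulus_cexp z :
  Num.sqrt (complex.Re (cexp z) ^+ 2 + complex.Im (cexp z) ^+ 2) = expR (complex.Re z).
Proof.
rewrite Re_cexp Im_cexp !exprMn -mulrDr addrC sin2cos2 subrK mulr1.
by rewrite sqrtr_sqr gtr0_norm // expR_gt0.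
Qed.

Lemma cintegrable_cexp (E : R * R -> R[i]) :
  measurable_fun setT (fun p => complex.Re (E p)) ->
  measurable_fun setT (fun p => complex.Im (E p)) ->
  (\int[@leb2 R]_p (expR (complex.Re (E p)))%:E < +oo)%E ->
  cintegrable (fun p => cexp (E p)).
Proof.
move=> mRe mIm finE.
have mexp := measurableT_comp (@measurable_expR R) mRe.
split.
- under eq_fun do rewrite Re_cexp.
  apply: measurable_funM mexp _.
  exact: measurableT_comp (continuous_measurable_fun (@continuous_cos R)) mIm.
- under eq_fun do rewrite Im_cexp.
  apply: measurable_funM mexp _.
  exact: measurableT_comp (continuous_measurable_fun (@continuous_sin R)) mIm.
- by under eq_integral do rewrite modulus_cexp.
Qed.

End cexp.

Section cintegral_comp.
Context {R : realType} {phi : R * R -> R * R}.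
Hypotheses (mphi : measurable_fun setT phi)
  (phi_leb2 : preserves_measure (@leb2 R) phi).

(* [R] carries its default sigma-algebra and that of Lebesgue measure, on which
   [leb2] lives; they agree up to conversion but not up to unification. *)
Let mphi_leb2 : measurable_fun [set: measurableTypeR R * measurableTypeR R] phi :=
  mphi.

Lemma cintegrable_comp (F : R * R -> R[i]) : cintegrable F -> cintegrable (F \o phi).
Proof.
case=> mRe mIm finF; split.
- exact: measurableT_comp mRe mphi.
- exact: measurableT_comp mIm mphi.
rewrite (ge0_integral_comp_preserving mphi_leb2 phi_leb2
  (fun p => (Num.sqrt (complex.Re (F p) ^+ 2 + complex.Im (F p) ^+ 2))%:E)) //.
apply/measurable_EFinP; apply: measurableT_comp.
  exact: continuous_measurable_fun (@sqrt_continuous R).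
exact: measurable_funD (measurable_funX 2 mRe) (measurable_funX 2 mIm).
Qed.

Lemma cintegral_comp (F : R * R -> R[i]) : cintegrable F ->
  cintegral (F \o phi) = cintegral F.
Proof.
case=> mRe mIm _; rewrite /cintegral /Rintegral.
have mERe : measurable_fun [set: measurableTypeR R * measurableTypeR R]
    (fun p => (complex.Re (F p))%:E) by exact/measurable_EFinP.
have mEIm : measurable_fun [set: measurableTypeR R * measurableTypeR R]
    (fun p => (complex.Im (F p))%:E) by exact/measurable_EFinP.
by rewrite /= (integral_comp_preserving mphi_leb2 phi_leb2 _ mERe)
  (integral_comp_preserving mphi_leb2 phi_leb2 _ mEIm).
Qed.
End cintegral_comp.

Section integrand.
Context {R : realType} (u alpha : R[i]) (k1 k2 : R).
Local Notation a := (complex.Re alpha).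
Local Notation b := (complex.Re u).

Definition integrand_exponent (p : R * R) : R[i] :=
  (- alpha * (k1 + k2 - p.1 - p.2)%:C - u * (p.1 - p.2)%:C
   - (expR (- (k1 - p.1)) + expR (- (p.1 - k2)) + expR (- (k2 - p.2)))%:C)%C.

Let decay1 (x : R) := (a - b) * x - a * (k1 + k2) - expR (x - k1) - expR (k2 - x).
Let decay2 (y : R) := (a + b) * y - expR (y - k2).
Let phase1 (x : R) :=
  (complex.Im alpha - complex.Im u) * x - complex.Im alpha * (k1 + k2).
Let phase2 (y : R) := (complex.Im alpha + complex.Im u) * y.

Lemma Re_integrand_exponent p :
  complex.Re (integrand_exponent p) = decay1 p.1 + decay2 p.2.
Proof.
case: p => x y; rewrite /decay1 /decay2 /integrand_exponent !opprB.
by case: alpha => ? ?; case: u => ? ? /=; ring.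
Qed.

Lemma Im_integrand_exponent p :
  complex.Im (integrand_exponent p) = phase1 p.1 + phase2 p.2.
Proof.
case: p => x y; rewrite /phase1 /phase2 /integrand_exponent.
by case: alpha => ? ?; case: u => ? ? /=; ring.
Qed.

Lemma cintegrable_integrand : 0 < complex.Re (u + alpha) ->
  cintegrable (fun p => cexp (integrand_exponent p)).
Proof.
move=> hpos; have s0 : 0 < a + b.
  by move: hpos; case: u => ? ?; case: alpha => ? ? /=; rewrite addrC.
have mdecay1 : measurable_fun setT decay1.
  rewrite /decay1; repeat (apply: measurable_funB || apply: measurable_funM
    || apply: measurableT_comp (@measurable_expR R) _) => //.
have mdecay2 : measurable_fun setT decay2.
  rewrite /decay2; repeat (apply: measurable_funB || apply: measurable_funM
    || apply: measurableT_comp (@measurable_expR R) _) => //.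
have mphase1 : measurable_fun setT phase1.
  by rewrite /phase1; apply: measurable_funB => //; exact: measurable_funM.
have mphase2 : measurable_fun setT phase2 by exact: measurable_funM.
apply: cintegrable_cexp.
- under eq_fun do rewrite Re_integrand_exponent.
  exact: measurable_funD (measurableT_comp mdecay1 measurable_fst)
                         (measurableT_comp mdecay2 measurable_snd).
- under eq_fun do rewrite Im_integrand_exponent.
  exact: measurable_funD (measurableT_comp mphase1 measurable_fst)
                         (measurableT_comp mphase2 measurable_snd).
under eq_integral do rewrite Re_integrand_exponent.
apply: integral_expR_sep_lty => //.
- have [C bound1] := two_sided_decay (a - b) k1 k2.
  apply: (integral_expR_lty (C := C - a * (k1 + k2)) ltr01 mdecay1) => x.
  by have := bound1 x; rewrite /decay1; lra.
- have [C bound2] := one_sided_decay k2 s0.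
  exact: integral_expR_lty s0 mdecay2 bound2.
Qed.
End integrand.

Local Close Scope classical_set_scope.
Local Open Scope complex_scope.

Theorem lemma3p6 (R : realType) (u alpha : R[i]) (k1 k2 : R)
  (hpos : 0 < complex.Re (u + alpha)) :
  let F := fun p : R * R =>
    cexp (- alpha * (k1 + k2 - p.1 - p.2)%:C - u * (p.1 - p.2)%:C
          - (expR (- (k1 - p.1)) + expR (- (p.1 - k2)) + expR (- (k2 - p.2)))%:C) in
  let G := fun p : R * R =>
    cexp (- alpha * (p.1 + p.2 - k1 - k2)%:C - u * (p.1 - p.2)%:C
          - (expR (- (p.1 - k1)) + expR (- (k1 - p.2)) + expR (- (p.2 - k2)))%:C) in
  [/\ cintegrable F, cintegrable G & cintegral F = cintegral G].
Proof.
move=> F G; set K := k1 + k2.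
pose phi (p : R * R) := (K - p.2, K - p.1).
have GE : G = F \o phi.
  apply/funext => -[x y]; rewrite /F /G /phi /K /=.
  have -> : k1 + k2 - (k1 + k2 - y) - (k1 + k2 - x) = x + y - k1 - k2 by ring.
  have -> : k1 + k2 - y - (k1 + k2 - x) = x - y by ring.
  have -> : - (k1 - (k1 + k2 - y)) = - (y - k2) by ring.
  have -> : - (k1 + k2 - y - k2) = - (k1 - y) by ring.
  have -> : - (k2 - (k1 + k2 - x)) = - (x - k1) by ring.
  by congr (cexp (_ - _%:C)); ring.
have mreflect : measurable_fun [set: measurableTypeR R] (fun x => K - x).
  exact: measurable_funB.
have mphi : measurable_fun setT phi.
  exact: measurable_fun_pair (measurableT_comp mreflect measurable_snd)
                             (measurableT_comp mreflect measurable_fst).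
have phi_leb2 : preserves_measure (@leb2 R) phi.
  exact: preserves_measure_prod_swap mreflect (lebesgue_measure_reflect K).
have intF : cintegrable F := cintegrable_integrand u alpha k1 k2 hpos.
rewrite GE; split; [exact: intF | exact: cintegrable_comp | exact/esym/cintegral_comp].
Qed.
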